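(* Let $\Gamma\subseteq\Lambda^+$ be reflective, with $S\subseteq\mathbb Z\Gamma$, $E(\Gamma)$ part of a basis of $(\mathbb Z\Gamma)^*$, and $\mathbb Z\Gamma$ $W$-invariant. Then $\langle\delta,\alpha\rangle\ge0$ for all $\delta\in E(\Gamma)$ and all $\alpha\in S$.
   Context: $G$: complex connected reductive group with Borel $B$, maximal torus $T$, weight lattice $\Lambda$, dominant weights $\Lambda^+$, simple roots $S$, Weyl group $W$ (acting on $\Lambda$ and dually), coroots $\alpha^\vee\in\mathrm{Hom}(\Lambda,\mathbb Z)$. A finitely generated $\Gamma\subseteq\Lambda^+$ is normal if $\mathbb Z\Gamma\cap\mathbb Q_{\ge0}\Gamma=\Gamma$. $\Gamma$ is reflective if it is normal and (1) $\mathrm{rk}\,\mathbb Z\Gamma=\mathrm{rk}\,\Lambda$; (2) the set of hyperplanes spanned by the codimension-1 faces of the cone $\mathbb Q_{\ge0}\Gamma$ is $W$-stable; (3) every codimension-1 face of $\mathbb Q_{\ge0}\Gamma$ meets the open positive Weyl chamber. $\Gamma^\vee=\{v\in\mathrm{Hom}_{\mathbb Z}(\mathbb Z\Gamma,\mathbb Q):\langle v,\gamma\rangle\ge0\ \forall\gamma\in\Gamma\}$; $E(\Gamma)$ is the set of primitive elements of $(\mathbb Z\Gamma)^*$ spanning extremal rays of $\Gamma^\vee$. *)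

(* Weights live in Q^r = 'rV[rat]_r; the weight lattice
   Lambda is Z^r (integral row vectors), Hom(Lambda,Z) is identified with
   Z^r via the standard pairing [dot]. *)
From HB Require Import structures.
From mathcomp Require Import all_boot all_order all_algebra.
Set Implicit Arguments. Unset Strict Implicit. Unset Printing Implicit Defensive.
Import Order.TTheory GRing.Theory Num.Theory.
Local Open Scope ring_scope.

Definition vec (r : nat) := 'rV[rat]_r.

Definition dot (r : nat) (u v : vec r) : rat := \sum_(k < r) u 0 k * v 0 k.

Definition is_intQ (q : rat) : Prop := exists z : int, q = z%:~R.
Definition integral (r : nat) (v : vec r) : Prop := forall k, is_intQ (v 0 k).

Definition refl (r n : nat) (alpha coroot : 'I_n -> vec r) (i : 'I_n) (x : vec r)
  : vec r := x - dot (coroot i) x *: alpha i.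

Definition wact (r n : nat) (alpha coroot : 'I_n -> vec r) (w : seq 'I_n)
  (x : vec r) : vec r := foldr (refl alpha coroot) x w.

Definition reductive_root_datum (r n : nat) (alpha coroot : 'I_n -> vec r) : Prop :=
  [/\ (forall i, integral (alpha i) /\ integral (coroot i)),
      free [seq alpha i | i <- enum 'I_n] /\ free [seq coroot i | i <- enum 'I_n],
      (forall i, dot (coroot i) (alpha i) = 2),
      (forall i j, i != j -> dot (coroot i) (alpha j) <= 0 /\
                   (dot (coroot i) (alpha j) = 0 <-> dot (coroot j) (alpha i) = 0)) &
      (* W finite: every element has a word of bounded length *)
      exists N : nat, forall w : seq 'I_n, exists w' : seq 'I_n,
        (size w' <= N)%N /\ forall x, wact alpha coroot w x = wact alpha coroot w' x].

Definition dominant (r n : nat) (coroot : 'I_n -> vec r) (x : vec r) : Prop :=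
  integral x /\ forall i, 0 <= dot (coroot i) x.

Definition inGamma (r : nat) (gens : seq (vec r)) (x : vec r) : Prop :=
  exists c : 'I_(size gens) -> nat, x = \sum_(k < size gens) (c k)%:R *: gens`_k.
Definition inZGamma (r : nat) (gens : seq (vec r)) (x : vec r) : Prop :=
  exists c : 'I_(size gens) -> int, x = \sum_(k < size gens) (c k)%:~R *: gens`_k.
Definition inCone (r : nat) (gens : seq (vec r)) (x : vec r) : Prop :=
  exists c : 'I_(size gens) -> rat, (forall k, 0 <= c k) /\
    x = \sum_(k < size gens) c k *: gens`_k.

Definition normal_monoid (r : nat) (gens : seq (vec r)) : Prop :=
  forall x, inZGamma gens x -> inCone gens x -> inGamma gens x.

Definition spanP (r : nat) (P : vec r -> Prop) (x : vec r) : Prop :=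
  exists s : seq (vec r), (forall y, y \in s -> P y) /\ x \in <<s>>%VS.
Definition dimP (r : nat) (P : vec r -> Prop) (d : nat) : Prop :=
  (exists s : seq (vec r), (forall y, y \in s -> P y) /\ free s /\ size s = d) /\
  (forall s : seq (vec r), (forall y, y \in s -> P y) -> free s -> (size s <= d)%N).

Definition cone_face (r : nat) (gens : seq (vec r)) (F : vec r -> Prop) : Prop :=
  exists v : vec r, (forall x, inCone gens x -> 0 <= dot v x) /\
    forall x, F x <-> (inCone gens x /\ dot v x = 0).

Definition facet (r : nat) (gens : seq (vec r)) (F : vec r -> Prop) : Prop :=
  cone_face gens F /\ exists d : nat, dimP (inCone gens) d.+1 /\ dimP F d.

Definition reflective (r n : nat) (alpha coroot : 'I_n -> vec r)
  (gens : seq (vec r)) : Prop :=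
  [/\ normal_monoid gens,
      \dim <<gens>>%VS = r,
      (forall (w : seq 'I_n) F, facet gens F -> exists F', facet gens F' /\
         forall x, spanP F' x <-> exists y, spanP F y /\ x = wact alpha coroot w y) &
      (forall F, facet gens F -> exists x, F x /\ forall i, 0 < dot (coroot i) x)].

(* (Z Gamma)^* = Hom(Z Gamma, Z), realised inside Q^r (Z Gamma has full rank) *)
Definition in_dual_lattice (r : nat) (gens : seq (vec r)) (v : vec r) : Prop :=
  forall x, inZGamma gens x -> is_intQ (dot v x).

Definition in_dual_cone (r : nat) (gens : seq (vec r)) (v : vec r) : Prop :=
  forall x, inGamma gens x -> 0 <= dot v x.

Definition primitive_dual (r : nat) (gens : seq (vec r)) (v : vec r) : Prop :=
  in_dual_lattice gens v /\ v != 0 /\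
  forall (u : vec r) (k : nat), in_dual_lattice gens u -> v = k%:R *: u -> k = 1%N.

Definition extremal_ray (r : nat) (gens : seq (vec r)) (v : vec r) : Prop :=
  in_dual_cone gens v /\ v != 0 /\
  forall a b, in_dual_cone gens a -> in_dual_cone gens b -> a + b = v ->
    exists t : rat, 0 <= t /\ a = t *: v.

Definition in_EGamma (r : nat) (gens : seq (vec r)) (v : vec r) : Prop :=
  primitive_dual gens v /\ extremal_ray gens v.

Definition E_part_of_basis (r : nat) (gens : seq (vec r)) : Prop :=
  exists B : seq (vec r),
    [/\ (forall b, b \in B -> in_dual_lattice gens b),
        (forall v, in_dual_lattice gens v -> exists c : 'I_(size B) -> int,
            v = \sum_(k < size B) (c k)%:~R *: B`_k),
        (forall c : 'I_(size B) -> int,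
            \sum_(k < size B) (c k)%:~R *: B`_k = 0 -> forall k, c k = 0) &
        (forall v, in_EGamma gens v -> v \in B)].

(* If delta spans an extremal ray of the dual cone, the face delta^perp of the
   cone Q_{>=0} Gamma is a facet.  By W-stability, s_i maps its hyperplane onto
   the hyperplane of some facet F', and F' contains a point y with
   <alpha_i^vee, y> > 0.  Writing y = s_i z with <delta, z> = 0 gives
   <alpha_i^vee, z> = - <alpha_i^vee, y> < 0 and
   0 <= <delta, y> = - <alpha_i^vee, z> <delta, alpha_i>, whence
   <delta, alpha_i> >= 0. *)
From HB Require Import structures.
From mathcomp Require Import all_boot all_order all_algebra.
From mathcomp Require Import lra zify.
Import Order.TTheory GRing.Theory Num.Theory.
Local Open Scope ring_scope.

Section Pairing.
Context {r : nat}.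
Implicit Types u v x y : vec r.

Lemma dotC u v : dot u v = dot v u.
Proof. by apply: eq_bigr => k _; rewrite mulrC. Qed.

Lemma dotZ u a x : dot u (a *: x) = a * dot u x.
Proof. by rewrite /dot mulr_sumr; apply: eq_bigr => k _; rewrite mxE mulrCA. Qed.

Lemma dotD u x y : dot u (x + y) = dot u x + dot u y.
Proof. by rewrite /dot -big_split; apply: eq_bigr => k _; rewrite mxE mulrDr. Qed.

Lemma dotB u x y : dot u (x - y) = dot u x - dot u y.
Proof. by rewrite dotD -scaleN1r dotZ mulN1r. Qed.

Lemma dotZl a u x : dot (a *: u) x = a * dot u x.
Proof. by rewrite dotC dotZ dotC. Qed.

Lemma dotDl u v x : dot (u + v) x = dot u x + dot v x.
Proof. by rewrite dotC dotD !(dotC x). Qed.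

Lemma dot_sum u m (F : 'I_m -> vec r) :
  dot u (\sum_(i < m) F i) = \sum_(i < m) dot u (F i).
Proof.
rewrite /dot; under eq_bigr do rewrite summxE mulr_sumr.
exact: exchange_big.
Qed.

Lemma dotvv_eq0 v : dot v v = 0 -> v = 0.
Proof.
rewrite /dot => /eqP; rewrite psumr_eq0 => [/allP vv0|k _]; last first.
  by rewrite -expr2 sqr_ge0.
apply/matrixP => i k; rewrite ord1 mxE.
by have := vv0 k (mem_index_enum k); rewrite /= mulf_eq0 orbb => /eqP.
Qed.

Lemma dot_span0 u s x :
  (forall y, y \in s -> dot u y = 0) -> x \in <<s>>%VS -> dot u x = 0.
Proof.
move=> su0 xs; rewrite (coord_span (X := in_tuple s) xs) dot_sum big1 // => i _.
by rewrite dotZ su0 ?mulr0 // mem_nth.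
Qed.

Lemma spanP_self (P : vec r -> Prop) x : P x -> spanP P x.
Proof.
by move=> Px; exists [:: x]; split=> [y /[!inE] /eqP ->|]; rewrite ?memv_span1.
Qed.

Lemma spanP_orthogonal (P : vec r -> Prop) d x :
  (forall y, P y -> dot d y = 0) -> spanP P x -> dot d x = 0.
Proof. by move=> Pd0 [s [sP xs]]; apply: (dot_span0 _ s) xs => y /sP /Pd0. Qed.

Lemma dot_refl n (alpha coroot : 'I_n -> vec r) i u x :
  dot u (refl alpha coroot i x) = dot u x - dot (coroot i) x * dot u (alpha i).
Proof. by rewrite /refl dotB dotZ. Qed.

Lemma free_subseq_span (s : seq (vec r)) :
  exists s', [/\ {subset s' <= s}, free s' & (<<s'>> = <<s>>)%VS].
Proof.
elim: s => [|x t [t' [t't free_t' span_t']]].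
  by exists [::]; split => //; exact: nil_free.
have [xt'|xNt'] := boolP (x \in <<t'>>%VS).
  exists t'; split=> //; first by move=> y /t't; rewrite inE orbC => ->.
  rewrite span_cons -span_t'; apply/esym/addv_idPr.
  by rewrite -span_seq1; apply/span_subvP => y; rewrite inE => /eqP ->.
exists (x :: t'); split.
- by move=> y; rewrite !inE => /orP [->|/t't ->] //; rewrite orbT.
- by rewrite free_cons xNt'.
- by rewrite !span_cons span_t'.
Qed.

Lemma size_free_le (s : seq (vec r)) : free s -> (size s <= r)%N.
Proof.
move/eqP <-; have := dimvS (subvf <<s>>%VS).
by rewrite dimvf dim_matrix mul1r.
Qed.

Lemma size_free_orthogonal v (s : seq (vec r)) :
  v != 0 -> (forall y, y \in s -> dot v y = 0) -> free s -> (size s <= r.-1)%N.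
Proof.
move=> v0 sv0 free_s; rewrite leqNgt; apply/negP => s_big.
have span_full : (<<s>> = fullv)%VS.
  apply/eqP; rewrite eqEdim subvf dimvf dim_matrix mul1r (eqP free_s).
  exact: leq_trans (leqSpred r) s_big.
have vv0 : dot v v = 0 by apply: dot_span0 _ _ _ sv0 _; rewrite span_full memvf.
by move: v0; rewrite (dotvv_eq0 _ vv0) eqxx.
Qed.

End Pairing.

Section Cone.
Context {r : nat} {gens : seq (vec r)}.

Lemma sum_indicator_scale (m : nat) (k : 'I_m) (g : 'I_m -> vec r) :
  \sum_(j < m) (j == k)%:R *: g j = g k.
Proof.
rewrite (bigD1 k) //= eqxx scale1r big1 ?addr0 // => j /negPf ->.
by rewrite scale0r.
Qed.

Lemma gens_inGamma (k : 'I_(size gens)) : inGamma gens gens`_k.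
Proof. by exists (fun j => nat_of_bool (j == k)); rewrite sum_indicator_scale. Qed.

Lemma gens_inCone (k : 'I_(size gens)) : inCone gens gens`_k.
Proof.
exists (fun j => (j == k)%:R); split; first by move=> j; exact: ler0n.
by rewrite sum_indicator_scale.
Qed.

Lemma mem_gens_inCone g : g \in gens -> inCone gens g.
Proof. by case/(nthP 0) => k k_lt <-; exact: (gens_inCone (Ordinal k_lt)). Qed.

Lemma facet_inCone F x : facet gens F -> F x -> inCone gens x.
Proof. by move=> [[v [_ Fv]] _] /Fv []. Qed.

Lemma dual_cone_inCone d x :
  in_dual_cone gens d -> inCone gens x -> 0 <= dot d x.
Proof.
move=> d_dual [c [c_ge0 ->]]; rewrite dot_sum sumr_ge0 // => k _.
by rewrite dotZ mulr_ge0 // d_dual //; exact: gens_inGamma.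
Qed.

Lemma in_dual_cone_gens a :
  (forall k : 'I_(size gens), 0 <= dot a gens`_k) -> in_dual_cone gens a.
Proof.
move=> a_ge0 x [c ->]; rewrite dot_sum sumr_ge0 // => k _.
by rewrite dotZ mulr_ge0.
Qed.

Lemma dimP_cone : \dim <<gens>>%VS = r -> dimP (inCone gens) r.
Proof.
move=> dim_gens; split; last by move=> s _; exact: size_free_le.
have [s [s_gens free_s span_s]] := free_subseq_span gens.
exists s; split; first by move=> y /s_gens; exact: mem_gens_inCone.
by split=> //; rewrite -(eqP free_s) span_s dim_gens.
Qed.

(* The slack of d on the generators absorbs a small multiple of u, because u
   vanishes wherever d does. *)
Lemma dual_cone_perturb d u :
  in_dual_cone gens d ->
  (forall g, g \in gens -> dot d g = 0 -> dot u g = 0) ->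
  exists2 e : rat, 0 < e &
    forall k : 'I_(size gens), e * `|dot u gens`_k| <= dot d gens`_k.
Proof.
move=> d_dual ud0.
have d_ge0 (k : 'I_(size gens)) : 0 <= dot d gens`_k.
  by apply: d_dual; exact: gens_inGamma.
pose T := \sum_(k < size gens) `|dot u gens`_k| / dot d gens`_k.
have T_ge0 : 0 <= T by apply: sumr_ge0 => k _; rewrite divr_ge0.
exists (1 + T)^-1; first by rewrite invr_gt0; lra.
move=> k; have [dk0|dk0] := eqVneq (dot d gens`_k) 0.
  by rewrite ud0 ?mem_nth // normr0 mulr0 dk0.
have dk_gt0 : 0 < dot d gens`_k by rewrite lt_def dk0 d_ge0.
have : `|dot u gens`_k| / dot d gens`_k <= T.
  rewrite /T (bigD1 k) //= lerDl sumr_ge0 // => l _.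
  by rewrite divr_ge0.
rewrite ler_pdivrMr // => uT.
by rewrite mulrC ler_pdivrMr; nra.
Qed.

Lemma extremal_ray_orthogonal d u :
  extremal_ray gens d ->
  (forall g, g \in gens -> dot d g = 0 -> dot u g = 0) ->
  exists t : rat, u = t *: d.
Proof.
move=> [d_dual [_ d_ext]] ud0.
have [e e_gt0 e_le] := dual_cone_perturb _ _ d_dual ud0.
pose a := 2^-1 *: (d + e *: u); pose b := 2^-1 *: (d + (- e) *: u).
have ab_dual (c : rat) : `|c| = e -> in_dual_cone gens (2^-1 *: (d + c *: u)).
  move=> c_e; apply: in_dual_cone_gens => k.
  rewrite dotZl dotDl dotZl mulr_ge0 //.
  have := e_le k; rewrite -c_e -normrM.
  have := ler_norm (- (c * dot u gens`_k)); rewrite normrN; lra.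
have a_dual : in_dual_cone gens a by apply: ab_dual; rewrite gtr0_norm.
have b_dual : in_dual_cone gens b by apply: ab_dual; rewrite normrN gtr0_norm.
have ab_d : a + b = d.
  rewrite /a /b -scalerDr addrACA scaleNr subrr addr0 -mulr2n -scaler_nat.
  by rewrite scalerA mulVf ?scale1r.
have [t [_ a_td]] := d_ext a b a_dual b_dual ab_d.
have eu : e *: u = (2 * t - 1) *: d.
  rewrite scalerBl scale1r -scalerA -a_td /a scalerA mulfV // scale1r.
  by rewrite addrAC subrr add0r.
exists (e^-1 * (2 * t - 1)).
by rewrite -scalerA -eu scalerA mulVf ?scale1r ?gt_eqF.
Qed.

Lemma extremal_ray_face_dim d :
  extremal_ray gens d ->
  (r <= (\dim <<[seq g <- gens | dot d g == 0%R]>>%VS).+1)%N.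
Proof.
move=> d_ext; set G0 := [seq _ <- _ | _].
pose X := vbasis <<G0>>%VS; pose m := \dim <<G0>>%VS.
pose M : 'M[rat]_(r, m) := \matrix_(j, k) X`_k 0 j.
have ker_line : (kermx M <= d)%MS.
  apply/row_subP => j; apply/sub_rVP; apply: extremal_ray_orthogonal d_ext _.
  have uM0 : row j (kermx M) *m M = 0 by rewrite -row_mul mulmx_ker row0.
  move=> g g_gens dg0; apply: (@dot_span0 _ _ X).
    move=> y /(nthP 0) [k k_lt <-]; rewrite size_tuple in k_lt.
    have := congr1 (fun A : 'rV_m => A 0 (Ordinal k_lt)) uM0; rewrite !mxE => <-.
    by apply: eq_bigr => l _; rewrite !mxE.
  rewrite (span_basis (vbasisP _)); apply: memv_span.
  by rewrite mem_filter dg0 eqxx.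
have := mxrankS ker_line; rewrite mxrank_ker.
have := rank_leq_row d; have := rank_leq_col M; rewrite /m; lia.
Qed.

Lemma extremal_ray_facet d :
  \dim <<gens>>%VS = r -> extremal_ray gens d ->
  facet gens (fun x => inCone gens x /\ dot d x = 0).
Proof.
move=> dim_gens d_ext; have [d_dual [d0 _]] := d_ext.
have r_gt0 : (0 < r)%N by have := size_free_le [:: d]; rewrite seq1_free d0; exact.
split; first by exists d; split=> // x; exact: dual_cone_inCone.
exists r.-1; rewrite prednK //; split; first exact: dimP_cone.
split=> [|s s_face]; last by apply: size_free_orthogonal _ _ d0 _ => y /s_face [].
have [s [s_G0 free_s span_s]] := free_subseq_span [seq g <- gens | dot d g == 0].
have s_face y : y \in s -> inCone gens y /\ dot d y = 0.
  by move/s_G0; rewrite mem_filter => /andP [/eqP dy /mem_gens_inCone].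
exists s; split=> //; split=> //.
have := size_free_orthogonal _ _ d0 (fun y ys => (s_face y ys).2) free_s.
have : (r <= (size (s : seq (vec r))).+1)%N.
  by rewrite -(eqP free_s) span_s; exact: extremal_ray_face_dim.
have := prednK r_gt0; lia.
Qed.

End Cone.


Theorem mainTheorem17 (r n : nat) (alpha coroot : 'I_n -> vec r)
  (gens : seq (vec r)) :
  reductive_root_datum alpha coroot ->
  (forall g, g \in gens -> dominant coroot g) ->
  reflective alpha coroot gens ->
  (forall i, inZGamma gens (alpha i)) ->
  E_part_of_basis gens ->
  (forall (w : seq 'I_n) x, inZGamma gens x -> inZGamma gens (wact alpha coroot w x)) ->
  forall delta, in_EGamma gens delta -> forall i, 0 <= dot delta (alpha i).
Proof.
move=> [_ _ cartan _ _] _ [_ dim_gens W_stable chamber] _ _ _ delta [_ ext] i.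
have facet_F := extremal_ray_facet _ dim_gens ext.
have [F' [facet_F' span_F']] := W_stable [:: i] _ facet_F.
have [y [F'y y_pos]] := chamber F' facet_F'.
have y_cone := facet_inCone _ _ facet_F' F'y.
have [z [span_z y_z]] := (span_F' y).1 (spanP_self _ _ F'y).
have dz : dot delta z = 0 by apply: (spanP_orthogonal _ _ _ _ span_z) => x [].
have := dual_cone_inCone _ _ ext.1 y_cone; have := y_pos i.
rewrite y_z /wact /= !dot_refl cartan dz; nra.
Qed.
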